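(* Let $G$ be either (i) $K_n-M$ where $n\geq 4$ is even and $M$ is a perfect matching of $K_n$, or (ii) $K_{n,n}-M$ where $n\geq 3$ and $M$ is a perfect matching of $K_{n,n}$. Suppose $G$ is edge-reconstructable (so that $ern(G)$ is defined). Then $ern(G)\geq 3$.
   Context: All graphs are finite and simple; $K-M$ denotes the graph on $V(K)$ with edge set $E(K)\setminus M$. For a graph $G$ and $e\in E(G)$, the unlabeled graph $G-e$ is an edge-card of $G$; the edge-deck $\mathcal{ED}(G)$ is the multiset of all edge-cards $G-e$, $e\in E(G)$ (taken up to isomorphism). For a sub-multiset $S\subseteq\mathcal{ED}(G)$, a blocker of $S$ is a graph $H\not\cong G$ such that $S\subseteq\mathcal{ED}(H)$ as multisets. $G$ is reconstructable from $S$ if $S$ has no blocker; $G$ is edge-reconstructable if it is reconstructable from $\mathcal{ED}(G)$. For such $G$, the edge reconstruction number $ern(G)$ is the minimum size of a sub-multiset $S\subseteq\mathcal{ED}(G)$ from which $G$ is reconstructable. *)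

From HB Require Import structures.
From mathcomp Require Import all_boot perm.
Set Implicit Arguments. Unset Strict Implicit. Unset Printing Implicit Defensive.

(* A finite simple graph on a vertex type V is represented by its edge set,
   a set of 2-element subsets of V. *)
Notation graph V := {set {set V}}.

Definition simple_graph (V : finType) (E : graph V) : Prop :=
  forall e, e \in E -> #|e| = 2.

Definition giso (V : finType) (E1 E2 : graph V) : Prop :=
  exists p : {perm V}, [set (fun x : V => p x) @: e | e : {set V} in E1] = E2.

Definition complete_graph (V : finType) : graph V := [set e : {set V} | #|e| == 2].

Definition complete_bipartite (n : nat) : graph ('I_n + 'I_n) :=
  [set e : {set 'I_n + 'I_n} | [exists i : 'I_n, exists j : 'I_n, e == [set inl i; inr j]]].

Definition perfect_matching (V : finType) (K M : graph V) : Prop :=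
  [/\ M \subset K,
      (forall e1 e2, e1 \in M -> e2 \in M -> e1 != e2 -> [disjoint e1 & e2])
    & (forall v : V, exists2 e, e \in M & v \in e)].

(* The sequence S of (unlabeled) cards is a sub-multiset of the edge-deck of G:
   distinct edges f i of G with S_i isomorphic to G - f i. *)
Definition sub_deck (V : finType) (S : seq (graph V)) (G : graph V) : Prop :=
  exists f : 'I_(size S) -> {set V},
    injective f /\ forall i, f i \in G /\ giso (nth set0 S i) (G :\ f i).

Definition edge_deck (V : finType) (G : graph V) : seq (graph V) :=
  [seq G :\ e | e <- enum G].

Definition blocker (V : finType) (G : graph V) (S : seq (graph V)) (H : graph V) : Prop :=
  [/\ simple_graph H, ~ giso H G & sub_deck S H].

Definition reconstructable_from (V : finType) (G : graph V) (S : seq (graph V)) : Prop :=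
  sub_deck S G /\ ~ (exists H, blocker G S H).

Definition edge_reconstructable (V : finType) (G : graph V) : Prop :=
  reconstructable_from G (edge_deck G).

From HB Require Import structures.
From mathcomp Require Import all_boot perm.
Set Implicit Arguments. Unset Strict Implicit. Unset Printing Implicit Defensive.

(* Write G = K - M. For an edge ab of G with matching partners aa', bb', let
   H = G - ab + aa'. Then H - aa' = G - ab, and the transposition (a b')
   preserves K and turns M into M - {aa', bb'} + {ab, a'b'}, hence maps G - ab
   onto H - a'b'. Automorphisms of (K, M) act transitively on the edges of G,
   so all cards of G are isomorphic and H shares any two of them. But H is not
   isomorphic to the regular graph G: b has lost a neighbour. So H blocks every
   sub-deck of size at most 2 (and K blocks the empty one). *)

Lemma imset_set2 (T U : finType) (f : T -> U) x y : f @: [set x; y] = [set f x; f y].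
Proof. by rewrite imsetU1 imset_set1. Qed.

Lemma set_neq_mem (T : finType) (A B : {set T}) x : x \in A -> x \notin B -> A != B.
Proof. by move=> xA; apply: contraNneq => <-. Qed.

Lemma imset_id_on (T : finType) (f : T -> T) (A : {set T}) : {in A, f =1 id} -> f @: A = A.
Proof. by move=> fid; rewrite -[RHS]imset_id; apply: eq_in_imset. Qed.

Lemma imset_tperm_out (T : finType) (x y : T) (A : {set T}) :
  x \notin A -> y \notin A -> (fun z => tperm x y z) @: A = A.
Proof.
move=> xA yA; apply: imset_id_on => z zA; apply: tpermD.
  by apply: contraNneq xA => ->.
by apply: contraNneq yA => ->.
Qed.

Lemma tperm2_out (T : finType) (u u' v v' x : T) :
  x \notin [set u; u'] -> x \notin [set v; v'] -> (tperm u v * tperm u' v')%g x = x.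
Proof. by rewrite !inE => /norP [ux u'x] /norP [vx v'x]; rewrite permM !tpermD // eq_sym. Qed.

Section Relabel.
Variable V : finType.
Implicit Types (p q : {perm V}) (E : graph V) (e : {set V}).

Definition relabel p E : graph V := [set (fun x : V => p x) @: e | e : {set V} in E].

Lemma gisoP E E' : giso E E' <-> exists p, relabel p E = E'.
Proof. by []. Qed.

Lemma imset_permKV p e : (fun x => p x) @: ((fun x => p^-1%g x) @: e) = e.
Proof. by rewrite -imset_comp -[RHS]imset_id; apply: eq_imset => x /=; rewrite permKV. Qed.

Lemma imset_perm_inj p : injective (fun e => (fun x => p x) @: e).
Proof. exact/imset_inj/perm_inj. Qed.

Lemma mem_relabel p E e : (e \in relabel p E) = ((fun x => p^-1%g x) @: e \in E).
Proof. by rewrite -{1}(imset_permKV p e) mem_imset //; apply: imset_perm_inj. Qed.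

Lemma card_relabel p E : #|relabel p E| = #|E|.
Proof. exact/card_imset/imset_perm_inj. Qed.

Lemma relabelM p q E : relabel (p * q)%g E = relabel q (relabel p E).
Proof.
rewrite /relabel -imset_comp; apply: eq_imset => e /=.
by rewrite -imset_comp; apply: eq_imset => x /=; rewrite permM.
Qed.

Lemma relabelD p E E' : relabel p (E :\: E') = relabel p E :\: relabel p E'.
Proof. by apply/setP => f; rewrite mem_relabel !inE -!mem_relabel. Qed.

Lemma relabelU p E E' : relabel p (E :|: E') = relabel p E :|: relabel p E'.
Proof. exact: imsetU. Qed.

Lemma relabel_setD1 p E e : relabel p (E :\ e) = relabel p E :\ ((fun x => p x) @: e).
Proof. by rewrite relabelD /relabel imset_set1. Qed.

Lemma relabel_id_on p E : {in E, forall e, (fun x => p x) @: e = e} -> relabel p E = E.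
Proof. by move=> pid; rewrite -[RHS]imset_id; apply: eq_in_imset. Qed.

Lemma relabel_stable p E : {in E, forall e, (fun x => p x) @: e \in E} -> relabel p E = E.
Proof.
move=> pE; apply/eqP; rewrite eqEcard card_relabel leqnn andbT.
by apply/subsetP => _ /imsetP [e /pE pe ->].
Qed.

Lemma giso_card E E' : giso E E' -> #|E| = #|E'|.
Proof. by move=> /gisoP [p <-]; rewrite card_relabel. Qed.

Lemma giso_trans E1 E2 E3 : giso E1 E2 -> giso E2 E3 -> giso E1 E3.
Proof.
by move=> /gisoP [p pE1] /gisoP [q qE2]; apply/gisoP; exists (p * q)%g; rewrite relabelM pE1.
Qed.

End Relabel.

Definition nbhd (V : finType) (E : graph V) (v : V) : {set V} := [set w | [set v; w] \in E].

Lemma nbhd_relabel (V : finType) (p : {perm V}) (E : graph V) v :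
  nbhd (relabel p E) (p v) = (fun x => p x) @: nbhd E v.
Proof.
apply/setP => w; rewrite inE mem_relabel imset_set2 permK.
by rewrite -[in RHS](permKV p w) mem_imset ?inE //; apply: perm_inj.
Qed.

Section PerfectMatching.
Variables (V : finType) (K M : graph V).
Hypothesis K_simple : simple_graph K.
Hypothesis M_pm : perfect_matching K M.

Lemma matching_sub : M \subset K.
Proof. by case: M_pm. Qed.

Lemma matched_neq v w : [set v; w] \in M -> v != w.
Proof.
move=> /(subsetP matching_sub) /K_simple; rewrite cards2.
by case: (v != w).
Qed.

Lemma matched_disjoint e f x : e \in M -> f \in M -> e != f -> x \in f -> x \notin e.
Proof. by case: M_pm => _ disj _ eM fM ef xf; rewrite (disjointFl (disj _ _ eM fM ef) xf). Qed.

Lemma matched_partner v : exists w, [set v; w] \in M.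
Proof.
case: M_pm => _ _ /(_ v) [e eM ve].
have /cards2P [x [y [_ exy]]] : #|e| == 2 by rewrite K_simple // (subsetP matching_sub).
move: ve; rewrite exy !inE => /orP [] /eqP ->; first by exists y; rewrite -exy.
by exists x; rewrite setUC -exy.
Qed.

Lemma matched_uniq v w w' : [set v; w] \in M -> [set v; w'] \in M -> w = w'.
Proof.
move=> vwM vw'M; have [vw|ne] := eqVneq [set v; w] [set v; w'].
  have : w \in [set v; w'] by rewrite -vw !inE eqxx orbT.
  by rewrite !inE eq_sym (negbTE (matched_neq vwM)) => /eqP.
by move: (matched_disjoint vwM vw'M ne (setU11 v _)); rewrite setU11.
Qed.

Definition matching_aut (p : {perm V}) := relabel p K = K /\ relabel p M = M.

Lemma matching_autM p q : matching_aut p -> matching_aut q -> matching_aut (p * q)%g.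
Proof. by move=> [pK pM] [qK qM]; split; rewrite relabelM ?pK ?pM. Qed.

Lemma relabel_complement p : matching_aut p -> relabel p (K :\: M) = K :\: M.
Proof. by case=> pK pM; rewrite relabelD pK pM. Qed.

Lemma imset_unmatched p e : matching_aut p -> e \in K :\: M -> (fun x => p x) @: e \in K :\: M.
Proof. by move=> /relabel_complement {2}<- eG; rewrite mem_imset //; apply: imset_perm_inj. Qed.

Lemma unmatched_edge_out x y x' :
  [set x; y] \in K :\: M -> [set x; x'] \in M -> y \notin [set x; x'].
Proof.
rewrite inE => /andP [xyM /K_simple]; rewrite cards2 !inE => xy xx'M.
apply/norP; split; first by rewrite eq_sym; case: (x != y) xy.
by apply: contraNneq xyM => ->.
Qed.

Lemma card_nbhd_complement v : #|nbhd K v| = (#|nbhd (K :\: M) v|).+1.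
Proof.
have [w vwM] := matched_partner v.
suff -> : nbhd K v = w |: nbhd (K :\: M) v by rewrite cardsU1 !inE vwM.
apply/setP => x; rewrite !inE; have [->|xw] := eqVneq x w; first exact: (subsetP matching_sub).
by case vxM: ([set v; x] \in M); rewrite //= (matched_uniq vwM vxM) eqxx in xw.
Qed.

Lemma relabel_tperm_matched u u' v :
  [set u; u'] \in M -> v \in [set u; u'] -> relabel (tperm u v) M = M.
Proof.
move=> uM vu; apply: relabel_stable => e eM.
have [->|ne] := eqVneq e [set u; u'].
  move: vu; rewrite !inE imset_set2 tpermL => /orP [] /eqP ->.
    by rewrite tperm1 perm1.
  by rewrite tpermR setUC.
rewrite imset_tperm_out //; first by apply: (matched_disjoint eM uM ne); rewrite setU11.
exact: (matched_disjoint eM uM ne).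
Qed.

Lemma matched_edges_neq u u' v v' :
  [set u; u'] \in M -> [set v; v'] \in M -> [set u; u'] != [set v; v'] ->
  [/\ u != v, u != v', u' != v & u' != v'].
Proof.
move=> uM vM neuv; have vu : [set v; v'] != [set u; u'] by rewrite eq_sym.
move: (matched_disjoint vM uM vu (x := u)) (matched_disjoint vM uM vu (x := u')).
by rewrite !inE !eqxx orbT !negb_or => /(_ isT) /andP [-> ->] /(_ isT) /andP [-> ->].
Qed.

Lemma relabel_tperm2_matched u u' v v' :
  [set u; u'] \in M -> [set v; v'] \in M -> [set u; u'] != [set v; v'] ->
  relabel (tperm u v * tperm u' v') M = M.
Proof.
move=> uM vM neuv; have [uv uv' u'v _] := matched_edges_neq uM vM neuv.
set s := (tperm u v * tperm u' v')%g.
have uu' := matched_neq uM; have vv' := matched_neq vM.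
have su : s u = v by rewrite permM tpermL tpermD // eq_sym.
have su' : s u' = v' by rewrite permM (tpermD uu') ?tpermL // eq_sym.
have sv : s v = u by rewrite permM tpermR tpermD // eq_sym.
have sv' : s v' = u' by rewrite permM (tpermD uv' vv') tpermR.
apply: relabel_stable => e eM.
have [->|neu] := eqVneq e [set u; u']; first by rewrite imset_set2 su su'.
have [->|nev] := eqVneq e [set v; v']; first by rewrite imset_set2 sv sv'.
rewrite imset_id_on // => x xe; apply: tperm2_out; apply: contraL xe; exact: matched_disjoint.
Qed.

Section EdgeTransitive.
(* [C u v]: u and v lie in the same part of K (always, for K_n; on the same
   side, for K_{n,n}). *)
Variable C : rel V.
Hypothesis tperm_C : forall u v, C u v -> relabel (tperm u v) K = K.
Hypothesis C_adj : forall u v u' v',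
  [set u; u'] \in K -> [set v; v'] \in K -> C u v -> C u' v'.
Hypothesis C_edge : forall c d a, [set c; d] \in K -> C c a || C d a.
Hypothesis C_nbr : forall a x y, [set a; x] \in K -> [set a; y] \in K -> C x y.

Lemma matched_swap u u' v v' : [set u; u'] \in M -> [set v; v'] \in M -> C u v ->
  exists2 s, matching_aut s & s u = v /\
    forall x, x \notin [set u; u'] -> x \notin [set v; v'] -> s x = x.
Proof.
move=> uM vM Cuv; have [euv|neuv] := eqVneq [set u; u'] [set v; v'].
  exists (tperm u v).
    by split; [apply: tperm_C | apply: (relabel_tperm_matched uM); rewrite euv setU11].
  split=> [|x]; first exact: tpermL.
  by rewrite !inE => /norP [ux _] /norP [vx _]; rewrite tpermD // eq_sym.
have Cu'v' : C u' v' by apply: (C_adj _ _ Cuv); apply: (subsetP matching_sub).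
exists (tperm u v * tperm u' v')%g.
  by split; [rewrite relabelM !tperm_C | apply: relabel_tperm2_matched].
have [uv uv' u'v _] := matched_edges_neq uM vM neuv.
split=> [|x]; first by rewrite permM tpermL tpermD // eq_sym ?(matched_neq vM).
exact: tperm2_out.
Qed.

Lemma unmatched_edge_transitive e1 e2 : e1 \in K :\: M -> e2 \in K :\: M ->
  exists2 s, matching_aut s & (fun x => s x) @: e2 = e1.
Proof.
move=> e1G e2G; have /setDP [e1K _] := e1G; have /setDP [e2K _] := e2G.
have /cards2P [a [b [_ e1ab]]] : #|e1| == 2 by rewrite K_simple.
have /cards2P [c0 [d0 [_ e2c0d0]]] : #|e2| == 2 by rewrite K_simple.
subst e1 e2.
have [c [d [e2cd Cca]]] : exists c d, [set c0; d0] = [set c; d] /\ C c a.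
  by case/orP: (C_edge a e2K) => ?; [exists c0, d0 | exists d0, c0; rewrite setUC].
rewrite e2cd in e2G *.
(* Move c onto a, then, fixing a, move the image of d onto b. *)
have [a' aa'M] := matched_partner a; have [c' cc'M] := matched_partner c.
have [s1 s1aut [s1c _]] := matched_swap cc'M aa'M Cca.
have as1dG : [set a; s1 d] \in K :\: M by rewrite -s1c -imset_set2 imset_unmatched.
have [d1' d1d1'M] := matched_partner (s1 d); have [b' bb'M] := matched_partner b.
have Cd1b : C (s1 d) b by apply: (C_nbr (a := a)); apply: (subsetP (subsetDl K M)).
have [s2 s2aut [s2d1 s2fix]] := matched_swap d1d1'M bb'M Cd1b.
exists (s1 * s2)%g; first exact: matching_autM.
rewrite imset_set2 !permM s1c s2d1 s2fix //.
  by apply: unmatched_edge_out d1d1'M; rewrite setUC.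
by apply: unmatched_edge_out bb'M; rewrite setUC.
Qed.

Lemma unmatched_cards_giso e1 e2 : e1 \in K :\: M -> e2 \in K :\: M ->
  giso ((K :\: M) :\ e2) ((K :\: M) :\ e1).
Proof.
move=> e1G e2G; have [s saut se] := unmatched_edge_transitive e1G e2G.
by apply/gisoP; exists s; rewrite relabel_setD1 relabel_complement // se.
Qed.

Section Switch.
Variables a b a' b' : V.
Hypotheses (abG : [set a; b] \in K :\: M) (aa'M : [set a; a'] \in M) (bb'M : [set b; b'] \in M).

Local Notation H := ((K :\: M) :\ [set a; b] :|: [set [set a; a']]).

Let aa' : a != a'. Proof. exact: matched_neq. Qed.
Let bb' : b != b'. Proof. exact: matched_neq. Qed.
Let a_out : a \notin [set b; b']. Proof. by apply: unmatched_edge_out; rewrite // setUC. Qed.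
Let b_out : b \notin [set a; a']. Proof. exact: unmatched_edge_out. Qed.
Let a'b' : a' != b'.
Proof.
apply/eqP => a'b'; move: b_out; rewrite (@matched_uniq a' b a) ?setU11 // setUC //.
by rewrite a'b'.
Qed.

Let aa'_bb' : [set a; a'] != [set b; b']. Proof. exact: set_neq_mem (setU11 a _) a_out. Qed.
Let aa'_ab : [set a; a'] != [set a; b].
Proof.
apply: (@set_neq_mem _ _ _ a'); first by rewrite !inE eqxx orbT.
by rewrite !inE negb_or !(eq_sym a') aa'; move: b_out; rewrite !inE => /norP [].
Qed.
Let aa'_a'b' : [set a; a'] != [set a'; b'].
Proof.
apply: (@set_neq_mem _ _ _ a); first by rewrite !inE eqxx.
by move: a_out; rewrite !inE !negb_or aa' => /andP [_ ->].
Qed.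

Let t_a' : tperm a b' a' = a'. Proof. by rewrite tpermD // eq_sym. Qed.
Let t_b : tperm a b' b = b.
Proof. by move: a_out; rewrite !inE => /norP [ab _]; rewrite tpermD // eq_sym. Qed.
Let t_K : relabel (tperm a b') K = K.
Proof.
have [abK _] := setDP abG.
by apply: tperm_C; apply: (C_nbr (a := b)); [rewrite setUC | apply: (subsetP matching_sub)].
Qed.

Lemma relabel_switch_matching : relabel (tperm a b') M =
  M :\: [set [set a; a']; [set b; b']] :|: [set [set a; b]; [set a'; b']].
Proof.
set X := [set [set a; a']; [set b; b']].
have XM : X \subset M by apply/subsetP => e; rewrite !inE => /orP [] /eqP ->.
rewrite -{1}(setID M X) (setIidPr XM) relabelU setUC; congr (_ :|: _).
  apply: relabel_id_on => e /setDP [eM]; rewrite !inE => /norP [ea eb].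
  apply: imset_tperm_out; first by apply: (matched_disjoint eM aa'M); rewrite // !inE eqxx.
  by apply: (matched_disjoint eM bb'M); rewrite // !inE eqxx orbT.
rewrite /relabel imset_set2 !imset_set2 tpermL tpermR t_a' t_b.
by rewrite (setUC [set b]) (setUC [set b']) setUC.
Qed.

Lemma switch_cards_giso : giso ((K :\: M) :\ [set a; b]) (H :\ [set a'; b']).
Proof.
apply/gisoP; exists (tperm a b').
rewrite relabel_setD1 relabelD t_K relabel_switch_matching imset_set2 tpermL t_b (setUC [set b']).
have aa'K : [set a; a'] \in K := subsetP matching_sub _ aa'M.
apply/setP => e; rewrite !inE.
have [->|_] := eqVneq e [set a; a'].
  by rewrite aa'K (negbTE aa'_bb') (negbTE aa'_ab) (negbTE aa'_a'b') orbT.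
have [->|_] := eqVneq e [set b; b']; first by rewrite bb'M /= !andbF.
by case: (e == [set a; b]); case: (e == [set a'; b']); case: (e \in M); case: (e \in K).
Qed.

Lemma switch_not_giso : (forall u v, #|nbhd K u| = #|nbhd K v|) -> ~ giso H (K :\: M).
Proof.
move=> K_regular /gisoP [p pH].
have : nbhd H b \proper nbhd (K :\: M) b.
  apply/properP; split.
    apply/subsetP => w; rewrite !inE => /orP [/andP [_ ->] // | /eqP bw].
    by move: b_out; rewrite -bw setU11.
  exists a; first by rewrite inE setUC.
  by rewrite !inE setUC eqxx /= eq_sym (negbTE aa'_ab).
move/proper_card; rewrite -(card_imset _ (@perm_inj _ p)) -nbhd_relabel pH.
suff -> : #|nbhd (K :\: M) (p b)| = #|nbhd (K :\: M) b| by rewrite ltnn.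
by apply: eq_add_S; rewrite -!card_nbhd_complement.
Qed.

Lemma switch_sub_deck S : size S <= 2 ->
  (forall i : 'I_(size S), giso (nth set0 S i) ((K :\: M) :\ [set a; b])) -> sub_deck S H.
Proof.
move=> S_small S_cards.
have a'b'G : [set a'; b'] \in K :\: M.
  rewrite inE; apply/andP; split; last first.
    by rewrite -t_K mem_relabel tpermV imset_set2 tpermR t_a' setUC (subsetP matching_sub).
  have a'aM : [set a'; a] \in M by rewrite setUC.
  apply/negP => /matched_uniq/(_ a'aM) b'a.
  by move: a_out; rewrite b'a !inE eqxx orbT.
exists (fun i => if val i == 0 then [set a; a'] else [set a'; b']); split.
  move=> i j /=; move: (ltn_ord i) (ltn_ord j) => ilt jlt.
  case: eqP => [i0|i0]; case: eqP => [j0|j0] eij; apply: ord_inj => //.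
  - by rewrite i0 j0.
  - by move: aa'_a'b'; rewrite eij eqxx.
  - by move: aa'_a'b'; rewrite eij eqxx.
  - move: (leq_trans ilt S_small) (leq_trans jlt S_small) i0 j0.
    by case: (nat_of_ord i) => [|[|?]]; case: (nat_of_ord j) => [|[|?]].
move=> i; case: eqP => _; split.
- by rewrite !inE eqxx orbT.
- rewrite (_ : H :\ [set a; a'] = (K :\: M) :\ [set a; b]); first exact: S_cards.
  by apply/setP => e; rewrite !inE; case: eqVneq => [->|_] /=; rewrite ?aa'M ?andbF ?orbF.
- rewrite in_setU in_setD1 a'b'G andbT; apply/orP; left.
  apply: (set_neq_mem (setU11 a' _)); rewrite !inE negb_or eq_sym aa' eq_sym /=.
  by move: b_out; rewrite !inE => /norP [].
- exact: giso_trans (S_cards i) switch_cards_giso.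
Qed.
End Switch.

Lemma reconstructable_size_ge3 (v0 : V) : (forall u v, #|nbhd K u| = #|nbhd K v|) ->
  forall S, reconstructable_from (K :\: M) S -> 3 <= size S.
Proof.
move=> K_regular S [[f [f_inj f_cards]] no_blocker]; rewrite leqNgt; apply/negP => S_small.
apply: no_blocker; case: (posnP (size S)) => [S0 | S_gt0].
  exists K; split=> //; last by exists f; split=> // i; suff : i < 0 by []; rewrite -S0.
  move=> /giso_card KG; have [w vwM] := matched_partner v0.
  suff /proper_card : K :\: M \proper K by rewrite KG ltnn.
  apply/properP; split; first exact: subsetDl.
  by exists [set v0; w]; rewrite ?inE ?vwM // (subsetP matching_sub).
have [abG _] := f_cards (Ordinal S_gt0).
have /cards2P [a [b [_ fab]]] : #|f (Ordinal S_gt0)| == 2.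
  by rewrite K_simple // (subsetP (subsetDl K M)).
rewrite fab in abG; have [a' aa'M] := matched_partner a; have [b' bb'M] := matched_partner b.
exists ((K :\: M) :\ [set a; b] :|: [set [set a; a']]); split.
- move=> e; rewrite !inE => /orP [/and3P [_ _ /K_simple] // | /eqP ->].
  exact/K_simple/(subsetP matching_sub).
- exact: switch_not_giso.
apply: (switch_sub_deck abG aa'M bb'M S_small) => i.
by have [fiG Si] := f_cards i; apply: giso_trans Si (unmatched_cards_giso abG fiG).
Qed.

End EdgeTransitive.

End PerfectMatching.

Lemma complete_graph_simple (V : finType) : simple_graph (complete_graph V).
Proof. by move=> e; rewrite inE => /eqP. Qed.

Lemma relabel_complete_graph (V : finType) (p : {perm V}) :
  relabel p (complete_graph V) = complete_graph V.
Proof. by apply: relabel_stable => e; rewrite !inE card_imset //; apply: perm_inj. Qed.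

Lemma card_nbhd_complete_graph (V : finType) (v : V) : #|nbhd (complete_graph V) v| = #|V|.-1.
Proof.
rewrite -(cardsC1 v); apply: eq_card => w.
by rewrite !inE cards2 (eq_sym v); case: (w != v).
Qed.

Lemma complete_graph_size_ge3 n (M : graph 'I_n) : 0 < n ->
  perfect_matching (complete_graph 'I_n) M ->
  forall S, reconstructable_from (complete_graph 'I_n :\: M) S -> 3 <= size S.
Proof.
move=> n_gt0 M_pm S.
apply: (@reconstructable_size_ge3 _ _ _ (@complete_graph_simple _) M_pm (fun _ _ => true)) => //.
- by move=> u v _; apply: relabel_complete_graph.
- exact: (Ordinal n_gt0).
- by move=> u v; rewrite !card_nbhd_complete_graph.
Qed.

Definition side n (x : 'I_n + 'I_n) : bool := if x is inl _ then true else false.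

Lemma mem_complete_bipartite n (x y : 'I_n + 'I_n) :
  ([set x; y] \in complete_bipartite n) = (side x != side y).
Proof.
rewrite inE; apply/existsP/idP => [[i /existsP [j /eqP xy]] | ].
  have : inl i \in [set x; y] by rewrite xy !inE eqxx.
  have : inr j \in [set x; y] by rewrite xy !inE eqxx orbT.
  by rewrite !inE; case: x y {xy} => [?|?] [?|?].
case: x y => [i|i] [j|j] //= _; first by exists i; apply/existsP; exists j.
by exists j; apply/existsP; exists i; rewrite setUC.
Qed.

Lemma complete_bipartite_simple n : simple_graph (complete_bipartite n).
Proof. by move=> e; rewrite inE => /existsP [i /existsP [j /eqP ->]]; rewrite cards2. Qed.

Lemma relabel_complete_bipartite n (p : {perm 'I_n + 'I_n}) :
  {mono p : x / side x} -> relabel p (complete_bipartite n) = complete_bipartite n.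
Proof.
move=> p_side; apply: relabel_stable => e.
rewrite [e \in _]inE => /existsP [i /existsP [j /eqP ->]].
by rewrite imset_set2 !mem_complete_bipartite !p_side.
Qed.

Lemma card_nbhd_complete_bipartite n (x : 'I_n + 'I_n) : #|nbhd (complete_bipartite n) x| = n.
Proof.
have inl_inj : injective (@inl 'I_n 'I_n) by move=> ? ? [].
have inr_inj : injective (@inr 'I_n 'I_n) by move=> ? ? [].
case: x => i; rewrite -[RHS]card_ord.
  rewrite -(card_imset _ inr_inj); apply: eq_card => -[] j; rewrite inE mem_complete_bipartite /=.
    by apply/esym/imsetP => -[].
  by rewrite mem_imset.
rewrite -(card_imset _ inl_inj); apply: eq_card => -[] j; rewrite inE mem_complete_bipartite /=.
  by rewrite mem_imset.
by apply/esym/imsetP => -[].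
Qed.

Lemma complete_bipartite_size_ge3 n (M : graph ('I_n + 'I_n)) : 0 < n ->
  perfect_matching (complete_bipartite n) M ->
  forall S, reconstructable_from (complete_bipartite n :\: M) S -> 3 <= size S.
Proof.
move=> n_gt0 M_pm S.
apply: (@reconstructable_size_ge3 _ _ _ (@complete_bipartite_simple n) M_pm
  (fun x y => side x == side y)).
- move=> u v /eqP uv; apply: relabel_complete_bipartite => x.
  by case: tpermP => // ->.
- move=> u v u' v'; rewrite !mem_complete_bipartite.
  by case: (side u) (side u') (side v) (side v') => [] [] [] [].
- by move=> c d a; rewrite !mem_complete_bipartite; case: (side c) (side d) (side a) => [] [] [].
- by move=> a x y; rewrite !mem_complete_bipartite; case: (side a) (side x) (side y) => [] [] [].
- exact: (inl (Ordinal n_gt0)).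
- by move=> u v; rewrite !card_nbhd_complete_bipartite.
Qed.

Theorem mainTheorem7 :
  (forall (n : nat) (M : graph 'I_n),
     4 <= n -> ~~ odd n -> perfect_matching (complete_graph 'I_n) M ->
     edge_reconstructable (complete_graph 'I_n :\: M) ->
     forall S, reconstructable_from (complete_graph 'I_n :\: M) S -> 3 <= size S)
  /\
  (forall (n : nat) (M : graph ('I_n + 'I_n)),
     3 <= n -> perfect_matching (complete_bipartite n) M ->
     edge_reconstructable (complete_bipartite n :\: M) ->
     forall S, reconstructable_from (complete_bipartite n :\: M) S -> 3 <= size S).
Proof.
(* Edge-reconstructability only makes ern(G) defined; the bound needs no such hypothesis. *)
split=> [n M n_ge4 _ M_pm _ | n M n_ge3 M_pm _].
  by apply: complete_graph_size_ge3 M_pm; apply: leq_trans n_ge4.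
by apply: complete_bipartite_size_ge3 M_pm; apply: leq_trans n_ge3.
Qed.
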